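(* Let $a<b$ and let $f:[a,b]\rightarrow\mathbb{R}$ be a differentiable mapping in $(a,b)$ such that $f'\in L^1[a,b]$ and $\gamma\le f'(x)\le \Gamma$ for all $x\in [a,b]$, where $\gamma,\Gamma$ are real constants. Put $S=\frac{f(b)-f(a)}{b-a}$. Then \[ \left|f\left(\frac{a+b}{2}\right)-\frac{1}{b-a}\int_{a}^{b}f(t)\,dt\right|\leq \frac{b-a}{2}(S-\gamma) \] and \[ \left|f\left(\frac{a+b}{2}\right)-\frac{1}{b-a}\int_{a}^{b}f(t)\,dt\right|\leq \frac{b-a}{2}(\Gamma-S). \] *)

From HB Require Import structures.
From mathcomp Require Import all_boot all_order all_algebra.
From mathcomp Require Import all_classical all_reals all_analysis.

From mathcomp Require Import all_boot all_order all_algebra.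
From mathcomp Require Import all_classical all_reals all_analysis.
From mathcomp Require Import ring lra.
Import Order.TTheory GRing.Theory Num.Theory.
Import numFieldNormedType.Exports.
Local Open Scope classical_set_scope.
Local Open Scope ring_scope.

(* With g x := f x - gamma * x, which is nondecreasing on [a, b] by the mean
   value theorem, f(m) minus the mean of f equals g(m) minus the mean of g,
   because the mean of a linear function over [a, b] is its value at the
   midpoint m.  For nondecreasing g, the mean over each half of [a, b] lies
   between the values of g at the endpoints of that half, so the mean over
   [a, b] lies between (g a + g m) / 2 and (g m + g b) / 2; hence
   |g m - mean g| <= (g b - g a) / 2 = (b - a) (S - gamma) / 2.  The bound with
   Gamma is the same argument for the nonincreasing f x - Gamma * x. *)

Section midpoint_mean.
Context {R : realType}.
Notation mu := (@lebesgue_measure R).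

Lemma continuous_itv_integrable {g : R -> R} {a b : R} :
  {within `[a, b], continuous g} -> mu.-integrable `[a, b] (EFin \o g).
Proof.
move=> cg; apply: continuous_compact_integrable => //.
exact: segment_compact.
Qed.

Lemma RintegralN (D : set R) (f : R -> R) : measurable D ->
  mu.-integrable D (EFin \o f) ->
  \int[mu]_(x in D) (- f x) = - \int[mu]_(x in D) f x.
Proof.
move=> mD ig.
rewrite /Rintegral; under eq_integral do rewrite EFinN.
rewrite integralN ?fineN //.
by apply: fin_num_adde_defl; rewrite fin_numN integrable_neg_fin_num.
Qed.

Lemma is_derive_half_sqr (x : R) :
  is_derive x 1 (fun y : R => 2^-1 * (y * y)) x.
Proof.
have dsqr : is_derive x 1 (fun y : R => y * y) (x *: 1 + x *: 1).
  exact: is_deriveM.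
have := is_deriveZ 2^-1 dsqr.
by congr is_derive; rewrite /GRing.scale /= mulr1; field.
Qed.

Lemma Rintegral_id (a b : R) : a < b ->
  \int[mu]_(x in `[a, b]) x = (b ^+ 2 - a ^+ 2) / 2.
Proof.
move=> ab.
have dF x : derivable (fun y : R => 2^-1 * (y * y)) x 1.
  by have [] := is_derive_half_sqr x.
have cF x : {for x, continuous (fun y : R => 2^-1 * (y * y))}.
  exact/differentiable_continuous/derivable1_diffP.
have cid : {within `[a, b], continuous (@id R)}.
  by apply: continuous_subspaceT => x; exact: cvg_id.
have dFab : derivable_oo_LRcontinuous (fun y : R => 2^-1 * (y * y)) a b.
  split; first by move=> x _; exact: dF.
  - apply: cvg_at_right_filter; exact: cF.
  - apply: cvg_at_left_filter; exact: cF.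
have F'id : {in `]a, b[, derive1 (fun y : R => 2^-1 * (y * y)) =1 id}.
  by move=> x _; have dx := is_derive_half_sqr x; rewrite derive1E derive_val.
rewrite /Rintegral (continuous_FTC2 ab cid dFab F'id) -EFinB /=.
by field.
Qed.

Lemma Rintegral_itv_bounds (g : R -> R) (c d lo hi : R) : c <= d ->
  mu.-integrable `[c, d] (EFin \o g) ->
  (forall x, c <= x <= d -> lo <= g x <= hi) ->
  lo * (d - c) <= \int[mu]_(x in `[c, d]) g x <= hi * (d - c).
Proof.
move=> cd ig gb.
have mu_cd : fine (mu `[c, d]) = d - c.
  rewrite lebesgue_measure_itv /= lte_fin.
  by case: ltgtP cd => //= -> _; rewrite subrr.
have icst (r : R) : mu.-integrable `[c, d] (EFin \o (fun=> r)).
  apply: continuous_itv_integrable; apply: continuous_subspaceT => x.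
  exact: cst_continuous.
rewrite -mu_cd -!Rintegral_cst //; apply/andP; split; apply: le_Rintegral => //;
  by move=> x /=; rewrite in_itv /= => /gb /andP[].
Qed.

Lemma mean_sub_linear (f : R -> R) (a b k : R) : a < b ->
  mu.-integrable `[a, b] (EFin \o f) ->
  (b - a)^-1 * \int[mu]_(x in `[a, b]) (f x - k * x)
    = (b - a)^-1 * \int[mu]_(x in `[a, b]) f x - k * ((a + b) / 2).
Proof.
move=> ab intf.
have iid : mu.-integrable `[a, b] (EFin \o id).
  apply: continuous_itv_integrable; apply: continuous_subspaceT => x.
  exact: cvg_id.
have ik : mu.-integrable `[a, b] (EFin \o (fun x => k * x)).
  apply: continuous_itv_integrable; apply: continuous_subspaceT => x.
  by apply: cvgMr; exact: cvg_id.
rewrite RintegralB // RintegralZl // Rintegral_id //.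
by field; rewrite subr_eq0 gt_eqF.
Qed.

Lemma mean_bounds_halves (g : R -> R) (a b P1 Q1 P2 Q2 : R) : a < b ->
  mu.-integrable `[a, b] (EFin \o g) ->
  (forall x, a <= x <= (a + b) / 2 -> P1 <= g x <= Q1) ->
  (forall x, (a + b) / 2 <= x <= b -> P2 <= g x <= Q2) ->
  (P1 + P2) / 2 <= (b - a)^-1 * \int[mu]_(x in `[a, b]) g x <= (Q1 + Q2) / 2.
Proof.
move=> ab ig gl gr.
set m := (a + b) / 2 in gl gr *.
have am : a <= m by rewrite /m; lra.
have mb : m <= b by rewrite /m; lra.
have split_m : \int[mu]_(x in `[a, b]) g x
    = \int[mu]_(x in `[a, m]) g x + \int[mu]_(x in `[m, b]) g x.
  have := @Rintegral_itvB R g (BLeft a) (BRight b) m ig.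
  rewrite !bnd_simp => /(_ am mb).
  rewrite Rintegral_itv_obnd_cbnd => [<-|]; first by rewrite addrC subrK.
  by apply: integrableS ig => //; apply: subset_itvr; rewrite bnd_simp.
have /andP[l1 u1] : P1 * (m - a) <= \int[mu]_(x in `[a, m]) g x <= Q1 * (m - a).
  apply: Rintegral_itv_bounds => //.
  by apply: integrableS ig => //; apply: subset_itvl; rewrite bnd_simp.
have /andP[l2 u2] : P2 * (b - m) <= \int[mu]_(x in `[m, b]) g x <= Q2 * (b - m).
  apply: Rintegral_itv_bounds => //.
  by apply: integrableS ig => //; apply: subset_itvr; rewrite bnd_simp.
have ba0 : 0 < b - a by rewrite subr_gt0.
rewrite split_m ler_pdivlMl // ler_pdivrMl //.
have ma : m - a = (b - a) / 2 by rewrite /m; field.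
have bm : b - m = (b - a) / 2 by rewrite /m; field.
rewrite ma bm in l1 u1 l2 u2.
by apply/andP; split; nra.
Qed.

Lemma midpoint_mean_ndecr {g : R -> R} {a b : R} : a < b ->
  {within `[a, b], continuous g} -> {in `[a, b] &, nondecreasing g} ->
  `| g ((a + b) / 2) - (b - a)^-1 * \int[mu]_(x in `[a, b]) g x |
    <= (g b - g a) / 2.
Proof.
move=> ab cg ndg.
set m := (a + b) / 2.
have am : a <= m by rewrite /m; lra.
have mb : m <= b by rewrite /m; lra.
have ig := continuous_itv_integrable cg.
have inab x : a <= x <= b -> x \in `[a, b] by rewrite in_itv.
have mono x y : a <= x -> x <= y -> y <= b -> g x <= g y.
  by move=> ax xy yb; apply: ndg => //; apply: inab; apply/andP; split;
    rewrite ?(le_trans ax) ?(le_trans _ yb).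
have /andP[lo hi] : (g a + g m) / 2 <= (b - a)^-1 * \int[mu]_(x in `[a, b]) g x
    <= (g m + g b) / 2.
  apply: mean_bounds_halves => // x /andP[lx rx].
  - by rewrite !mono ?(le_trans rx mb).
  - by rewrite !mono ?(le_trans am lx).
have gam : g a <= g m by rewrite mono.
have gmb : g m <= g b by rewrite mono.
by rewrite ler_norml; apply/andP; split; lra.
Qed.

Lemma midpoint_mean_nincr {g : R -> R} {a b : R} : a < b ->
  {within `[a, b], continuous g} -> {in `[a, b] &, {homo g : x y /~ x <= y}} ->
  `| g ((a + b) / 2) - (b - a)^-1 * \int[mu]_(x in `[a, b]) g x |
    <= (g a - g b) / 2.
Proof.
move=> ab cg nig.
have cNg : {within `[a, b], continuous (fun x => - g x)}.
  by move=> x; exact: continuousN (cg x).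
have ndNg : {in `[a, b] &, nondecreasing (fun x => - g x)}.
  by move=> x y xab yab xy; rewrite lerN2 nig.
have ig := continuous_itv_integrable cg.
have := midpoint_mean_ndecr ab cNg ndNg.
rewrite RintegralN // mulrN -opprD normrN.
by congr (_ <= _); rewrite opprK addrC.
Qed.

Lemma is_derive_sub_linear {f : R -> R} (k : R) {x : R} : derivable f x 1 ->
  is_derive x 1 (fun y => f y - k * y) (derive1 f x - k).
Proof.
move=> /derivableP df; rewrite derive1E.
have dk : is_derive x 1 (fun y : R => k * y) k.
  by have := is_deriveZ k (is_derive_id x 1); rewrite /GRing.scale /= mulr1.
exact: is_deriveB.
Qed.

Lemma continuous_sub_linear {f : R -> R} (k : R) {A : set R} :
  {within A, continuous f} -> {within A, continuous (fun y => f y - k * y)}.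
Proof.
move=> cf x; apply: continuousB; first exact: cf.
by apply: continuous_subspaceT => {}x; apply: cvgMr; exact: cvg_id.
Qed.

Lemma ndecr_sub_linear {f : R -> R} {a b k : R} :
  {within `[a, b], continuous f} ->
  (forall x, a < x < b -> derivable f x 1) ->
  (forall x, a < x < b -> k <= derive1 f x) ->
  {in `[a, b] &, nondecreasing (fun y => f y - k * y)}.
Proof.
move=> cf df dfk; apply: ger0_derive1_le_cc; last exact: continuous_sub_linear.
- by move=> x; rewrite in_itv /= => /df /(is_derive_sub_linear k)[].
- move=> x; rewrite in_itv /= => xab.
  have dg := is_derive_sub_linear k (df _ xab).
  by rewrite derive1E derive_val subr_ge0 dfk.
Qed.

Lemma nincr_sub_linear {f : R -> R} {a b K : R} :
  {within `[a, b], continuous f} ->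
  (forall x, a < x < b -> derivable f x 1) ->
  (forall x, a < x < b -> derive1 f x <= K) ->
  {in `[a, b] &, {homo (fun y => f y - K * y) : x y /~ x <= y}}.
Proof.
move=> cf df dfK; apply: ler0_derive1_le_cc; last exact: continuous_sub_linear.
- by move=> x; rewrite in_itv /= => /df /(is_derive_sub_linear K)[].
- move=> x; rewrite in_itv /= => xab.
  have dg := is_derive_sub_linear K (df _ xab).
  by rewrite derive1E derive_val subr_le0 dfK.
Qed.

End midpoint_mean.

Theorem corollary2p3 (R : realType) (a b gamma Gamma : R) (f : R -> R) :
  a < b ->
  {within `[a, b], continuous f} ->
  (forall x, a < x < b -> derivable f x 1) ->
  (@lebesgue_measure R).-integrable `[a, b] (EFin \o derive1 f) ->
  (forall x, a < x < b -> gamma <= derive1 f x <= Gamma) ->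
  let S := (f b - f a) / (b - a) in
  `| f ((a + b) / 2) - (b - a)^-1 * (\int[@lebesgue_measure R]_(t in `[a, b]) f t) |
      <= (b - a) / 2 * (S - gamma) /\
  `| f ((a + b) / 2) - (b - a)^-1 * (\int[@lebesgue_measure R]_(t in `[a, b]) f t) |
      <= (b - a) / 2 * (Gamma - S).
Proof.
move=> ab cf df _ dfb S.
have dfl x : a < x < b -> gamma <= derive1 f x by move/dfb/andP=> [].
have dfu x : a < x < b -> derive1 f x <= Gamma by move/dfb/andP=> [].
have ba0 : b - a != 0 by rewrite subr_eq0 gt_eqF.
have -> : (b - a) / 2 * (S - gamma) = (f b - gamma * b - (f a - gamma * a)) / 2.
  by rewrite /S; field.
have -> : (b - a) / 2 * (Gamma - S) = (f a - Gamma * a - (f b - Gamma * b)) / 2.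
  by rewrite /S; field.
have := midpoint_mean_ndecr ab (continuous_sub_linear gamma cf)
  (ndecr_sub_linear cf df dfl).
have := midpoint_mean_nincr ab (continuous_sub_linear Gamma cf)
  (nincr_sub_linear cf df dfu).
have intf := continuous_itv_integrable cf.
rewrite !mean_sub_linear //.
set m := (a + b) / 2; set A := _ * \int[_]_(_ in _) _.
have cancel_linear k : f m - k * m - (A - k * m) = f m - A by ring.
by rewrite !cancel_linear => hGamma hgamma; split.
Qed.
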